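(* Fix an $s \times t$ matrix $A$ and let $\tilde{A}$ be its folding, of dimensions $s' \times t'$. There exist polynomials $p_1,p_2$ (depending only on $A$) such that for every $\epsilon > 0$, with $n_0 = p_1(\epsilon^{-1})$ and $\delta = 1/p_2(\epsilon^{-1})$, for every $n \geq n_0$, every $n \times n$ matrix $M$ that contains $\epsilon n^{s'+t'}$ copies of $\tilde{A}$ also contains $\delta n^{s+t}$ copies of $A$.
   Context: Matrices are over a fixed finite alphabet, with ordered rows and columns. A submatrix is obtained by deleting rows and columns while preserving order; a copy of a matrix $B$ in $M$ is a submatrix of $M$ equal to $B$. The predecessor of a row is the row immediately preceding it. The folding $\tilde{A}$ of $A$ is the matrix obtained from $A$ by deleting every row of $A$ that is equal to its predecessor, and then deleting every column of the resulting matrix that is equal to its predecessor (in that matrix). *)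

From mathcomp Require Import all_boot all_order all_algebra.
From mathcomp Require Import reals.
Set Implicit Arguments. Unset Strict Implicit. Unset Printing Implicit Defensive.
Import Order.TTheory GRing.Theory Num.Theory.

Definition row_keep (S : finType) (m n : nat) (A : 'M[S]_(m, n)) : {set 'I_m} :=
  [set i : 'I_m | (nat_of_ord i == 0) ||
     [exists j : 'I_m, (j.+1 == nat_of_ord i) && (row j A != row i A)]].

Definition del_dup_rows (S : finType) (m n : nat) (A : 'M[S]_(m, n))
  : 'M[S]_(#|row_keep A|, n) :=
  \matrix_(i, j) A (enum_val i) j.

Definition frows (S : finType) (m n : nat) (A : 'M[S]_(m, n)) : nat :=
  #|row_keep A|.
Definition fcols (S : finType) (m n : nat) (A : 'M[S]_(m, n)) : nat :=
  #|row_keep (del_dup_rows A)^T|.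

(* The folding: first delete repeated rows, then delete every column of the
   resulting matrix equal to its predecessor. *)
Definition folding (S : finType) (m n : nat) (A : 'M[S]_(m, n))
  : 'M[S]_(frows A, fcols A) :=
  (del_dup_rows (del_dup_rows A)^T)^T.

Definition strict_incr (p n : nat) (f : {ffun 'I_p -> 'I_n}) : bool :=
  [forall i : 'I_p, forall j : 'I_p, (i < j)%N ==> (f i < f j)%N].

(* Number of copies of B in M: number of choices of p rows and q columns of M
   (each chosen as an increasing sequence of indices, i.e. a set of indices)
   whose submatrix equals B. *)
Definition ncopies (S : finType) (p q m n : nat) (B : 'M[S]_(p, q))
  (M : 'M[S]_(m, n)) : nat :=
  #|[set fg : {ffun 'I_p -> 'I_m} * {ffun 'I_q -> 'I_n} |
     [&& strict_incr fg.1, strict_incr fg.2 &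
         [forall i, forall j, M (fg.1 i) (fg.2 j) == B i j]]]|.

From mathcomp Require Import all_boot all_order all_algebra.
From mathcomp Require Import reals.
From mathcomp Require Import zify ring lra.
Import Order.TTheory GRing.Theory Num.Theory.
Set Implicit Arguments. Unset Strict Implicit. Unset Printing Implicit Defensive.

(* Say that B (of size p0 x q0) forces A (of size p x q) when every large
   n x n matrix with eps n^(p0+q0) copies of B has at least
   n^(p+q) / poly(1/eps) copies of A.  This relation is reflexive, transitive
   and invariant under transposition, and A is recovered from its folding by
   repeatedly duplicating a row (and, after transposing, a column), so it
   suffices that B forces B with one row k duplicated.  Group the c copies of
   B in M by where they send the rows other than k: there are at most
   N = n^(p0+q0-1) groups, so by Cauchy-Schwarz at least c^2/N ordered pairs of
   copies agree off row k.  Apart from the c diagonal pairs, half of them send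
   row k strictly lower in the first copy than in the second, and such a pair
   merges into a copy of B with row k duplicated.  Hence c^2 <= N (c + 2 c'),
   which gives c' >= eps^2 n^2 N / 4 once c >= eps n N and n >= 2/eps. *)

Lemma sqr_sum_le_card_sum_sqr (I : finType) (d : I -> nat) :
  (\sum_i d i) ^ 2 <= #|I| * \sum_i d i ^ 2.
Proof.
rewrite -(leq_pmul2l (isT : 0 < 2)).
have -> : 2 * (#|I| * \sum_i d i ^ 2) = \sum_a \sum_b (d a ^ 2 + d b ^ 2).
  under [RHS]eq_bigr do rewrite big_split /= sum_nat_const.
  by rewrite big_split /= -big_distrr sum_nat_const /= mul2n -addnn.
rewrite expnS expn1 big_distrl big_distrr /=; apply: leq_sum => a _.
rewrite big_distrr big_distrr /=; apply: leq_sum => b _.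
exact: (nat_Cauchy _ _).1.
Qed.

Section FiberPairs.
Variables (T U : finType) (h : T -> U) (X : {set T}).

Definition fiber_pairs : {set T * T} :=
  [set xy in setX X X | h xy.1 == h xy.2].

Lemma card_sqr_le_fiber_pairs : #|X| ^ 2 <= #|U| * #|fiber_pairs|.
Proof.
pose d u := #|[set x in X | h x == u]|.
have -> : #|X| = \sum_u d u.
  rewrite -sum1_card (partition_big h predT) //=.
  by apply: eq_bigr => u _; rewrite sum1dep_card.
have -> : #|fiber_pairs| = \sum_u d u ^ 2.
  rewrite -sum1_card (partition_big (fun xy => h xy.1) predT) //=.
  apply: eq_bigr => u _; rewrite sum1dep_card -mulnn -cardsX.
  apply: eq_card => -[x y]; rewrite !inE /=.
  by case: (h x =P u) => [->|]; case: (h y =P u) => [->|];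
     rewrite ?eqxx ?andbF ?andbT //= => /nesym/eqP/negbTE->; rewrite andbF.
exact: sqr_sum_le_card_sum_sqr.
Qed.

Variable key : T -> nat.
Hypothesis h_key_inj :
  {in X &, forall x y, h x = h y -> key x = key y -> x = y}.

Lemma card_fiber_pairs_le :
  #|fiber_pairs| <= #|X| + 2 * #|[set xy in fiber_pairs | key xy.1 < key xy.2]|.
Proof.
set L := [set xy in fiber_pairs | key xy.1 < key xy.2].
have sub : fiber_pairs \subset
    [set (x, x) | x in X] :|: L :|: [set (xy.2, xy.1) | xy in L].
  apply/subsetP => -[x y] Qxy; have := Qxy.
  rewrite !inE /= => /andP[/andP[Xx Xy] /eqP hxy].
  case: (ltngtP (key x) (key y)) => kxy.
  - by rewrite Xx Xy hxy eqxx orbT.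
  - by apply/orP; right; apply/imsetP; exists (y, x); rewrite // !inE Xx Xy hxy eqxx kxy.
  - by rewrite (h_key_inj Xx Xy hxy kxy) imset_f.
apply: leq_trans (subset_leq_card sub) _.
apply: leq_trans (leq_card_setU _ _) _; rewrite mul2n -addnn addnA leq_add //.
  apply: leq_trans (leq_card_setU _ _) _; exact/leq_add/leqnn/leq_imset_card.
exact: leq_imset_card.
Qed.

End FiberPairs.

Lemma ltn_lift2 n (h : 'I_n) (a b : 'I_n.-1) : (lift h a < lift h b) = (a < b).
Proof. by rewrite !ltnNge leq_bump2. Qed.

Lemma ltn_lift_dup p (k a : 'I_p.+1) : (lift (lift ord0 k) a < lift ord0 k) = (a <= k).
Proof. by rewrite /= /bump; lia. Qed.

Lemma ltn_dup_lift p (k b : 'I_p.+1) : (lift ord0 k < lift (lift ord0 k) b) = (k < b).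
Proof. by rewrite /= /bump; lia. Qed.

Lemma sorted_enum_ord n (P : {pred 'I_n}) : sorted (relpre val ltn) (enum P).
Proof.
rewrite /enum_mem -enumT; apply: sorted_filter; first by move=> ? ? ? /ltn_trans; apply.
by rewrite -sorted_map val_enum_ord iota_ltn_sorted.
Qed.

Lemma incr_surj_ord_id s m (sg : 'I_s -> 'I_m) :
  {homo sg : i j / i < j} -> (forall r, exists i, sg i = r) ->
  s = m /\ forall i, sg i = i :> nat.
Proof.
move=> sg_incr sg_surj.
have img_eq : [seq val (sg i) | i <- enum 'I_s] = iota 0 m.
  apply: (irr_sorted_eq ltn_trans ltnn); rewrite ?iota_ltn_sorted //.
    by rewrite sorted_map; apply: sub_sorted (sorted_enum_ord 'I_s) => i j /sg_incr.
  move=> r; rewrite mem_iota leq0n add0n /=; apply/mapP/idP; first by case=> i _ ->.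
  move=> lt_rm; have [i sg_i] := sg_surj (Ordinal lt_rm).
  by exists i; rewrite ?mem_enum ?sg_i.
have eq_sm : s = m by rewrite -(size_iota 0 m) -img_eq size_map size_enum_ord.
split=> // i; have /(congr1 (nth 0 ^~ i)) := img_eq.
by rewrite (nth_map i) ?size_enum_ord // nth_ord_enum nth_iota ?add0n // -eq_sm.
Qed.

Lemma ltn_enum_val n (P : {pred 'I_n}) (r r' : 'I_#|P|) :
  r < r' -> enum_val r < enum_val r'.
Proof.
move=> lt_rr'; rewrite /enum_val (set_nth_default (enum_default r) _ (_ : r' < _));
  last by rewrite -cardE.
apply: (sorted_ltn_nth _ _ (sorted_enum_ord P)) => //; rewrite ?inE -?cardE //.
by move=> ? ? ? /ltn_trans; apply.
Qed.

Definition copies (S : finType) p q m n (B : 'M[S]_(p, q)) (M : 'M[S]_(m, n))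
    : {set {ffun 'I_p -> 'I_m} * {ffun 'I_q -> 'I_n}} :=
  [set fg | [&& strict_incr fg.1, strict_incr fg.2 &
               [forall i, forall j, M (fg.1 i) (fg.2 j) == B i j]]].

Lemma ncopiesE (S : finType) p q m n (B : 'M[S]_(p, q)) (M : 'M[S]_(m, n)) :
  ncopies B M = #|copies B M|.
Proof. by []. Qed.

Lemma strict_incrP p n (f : {ffun 'I_p -> 'I_n}) :
  reflect {homo f : i j / i < j} (strict_incr f).
Proof.
apply: (iffP forallP) => [f_incr i j|f_incr i]; last first.
  by apply/forallP => j; apply/implyP/f_incr.
by have /forallP/(_ j)/implyP := f_incr i.
Qed.

Lemma ncopies_tr (S : finType) p q m n (B : 'M[S]_(p, q)) (M : 'M[S]_(m, n)) :
  ncopies B^T M^T = ncopies B M.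
Proof.
pose swap (gf : {ffun 'I_q -> 'I_n} * {ffun 'I_p -> 'I_m}) := (gf.2, gf.1).
rewrite !ncopiesE -(on_card_preimset (f := swap)); last first.
  by exists (fun fg => (fg.2, fg.1)) => -[].
apply: eq_card => -[g f]; rewrite !inE /= andbCA; congr [&& _, _ & _].
apply/forallP/forallP => copy_fg i; apply/forallP => j;
  by have /forallP/(_ i) := copy_fg j; rewrite !mxE.
Qed.

(* Rows k and k+1 of [dup_row k B] are both row k of B. *)
Definition dup_index p (k : 'I_p.+1) (i : 'I_p.+2) : 'I_p.+1 :=
  odflt k (unlift (lift ord0 k) i).

Definition dup_row (S : finType) p q (k : 'I_p.+1) (B : 'M[S]_(p.+1, q))
  : 'M[S]_(p.+2, q) := rowsub (dup_index k) B.

Section RowDuplication.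
Variables (S : finType) (p q m n : nat) (k : 'I_p.+1).
Variables (B : 'M[S]_(p.+1, q)) (M : 'M[S]_(m, n)).

Local Notation embedding := ({ffun 'I_p.+1 -> 'I_m} * {ffun 'I_q -> 'I_n})%type.

Definition omit_row (fg : embedding) : {ffun 'I_p -> 'I_m} * {ffun 'I_q -> 'I_n} :=
  ([ffun i => fg.1 (lift k i)], fg.2).

Lemma omit_row_eq (x y : embedding) : omit_row x = omit_row y ->
  x.2 = y.2 /\ forall j, j != k -> x.1 j = y.1 j.
Proof.
case=> eq_x1y1 ->; split=> // j; case: (unliftP k j) => [i ->|->]; last by rewrite eqxx.
by move=> _; have /ffunP/(_ i) := eq_x1y1; rewrite !ffunE.
Qed.

Lemma omit_row_inj (x y : embedding) :
  omit_row x = omit_row y -> x.1 k = y.1 k -> x = y.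
Proof.
case: x y => [f g] [f' g'] /omit_row_eq[/= <- eq_ff'] eq_k; congr pair.
by apply/ffunP => j; case: (eqVneq j k) => [->|/eq_ff'].
Qed.

Definition ordered_fiber_pairs : {set embedding * embedding} :=
  [set xy in fiber_pairs omit_row (copies B M) | xy.1.1 k < xy.2.1 k].

(* The rows of the first copy, with the image of row k under the second copy
   inserted right after row k. *)
Definition merge_rows (xy : embedding * embedding)
    : {ffun 'I_p.+2 -> 'I_m} * {ffun 'I_q -> 'I_n} :=
  ([ffun i => if unlift (lift ord0 k) i is Some j then xy.1.1 j else xy.2.1 k],
   xy.1.2).

Lemma merge_rows_copy xy : xy \in ordered_fiber_pairs ->
  merge_rows xy \in copies (dup_row k B) M.
Proof.
case: xy => [[f g] [f' g']]; rewrite !inE /=.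
move=> /andP[/andP[/and4P[/and3P[f_incr g_incr /forallP copy_fg] f'_incr _]]].
move=> /forallP copy_f'g /eqP/omit_row_eq[/= eq_gg' eq_ff'] lt_fk.
rewrite -eq_gg' in copy_f'g.
rewrite g_incr /=; apply/andP; split.
  apply/strict_incrP => i i'; rewrite !ffunE.
  case: unliftP => [a ->|->]; case: unliftP => [b ->|->];
    rewrite ?ltn_lift2 ?ltn_lift_dup ?ltn_dup_lift ?ltnn // => lt_ab.
  - exact/(strict_incrP _ f_incr).
  - apply: leq_ltn_trans lt_fk; move: lt_ab.
    rewrite leq_eqVlt => /orP[/eqP/val_inj->//|lt_ak].
    by rewrite ltnW //; apply/(strict_incrP _ f_incr).
  - rewrite eq_ff'; first exact/(strict_incrP _ f'_incr).
    by rewrite neq_ltn lt_ab orbT.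
apply/forallP => i; apply/forallP => j; rewrite !ffunE !mxE /dup_index.
case: (unliftP (lift ord0 k) i) => [a|] _ /=.
  by have /forallP := copy_fg a.
by have /forallP := copy_f'g k.
Qed.

Lemma merge_rows_inj : {in ordered_fiber_pairs &, injective merge_rows}.
Proof.
move=> [x y] [x' y']; rewrite !inE /= => /andP[/andP[_ /eqP omit_xy] _].
move=> /andP[/andP[_ /eqP omit_x'y'] _] [/ffunP eq_merge eq_x2].
have eq_x : x = x'.
  apply: injective_projections eq_x2; apply/ffunP => j.
  by have := eq_merge (lift (lift ord0 k) j); rewrite !ffunE liftK.
have eq_yk : y.1 k = y'.1 k.
  by have := eq_merge (lift ord0 k); rewrite !ffunE unlift_none.
rewrite -eq_x in omit_x'y' *; congr pair; apply: omit_row_inj eq_yk.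
by rewrite -omit_xy -omit_x'y'.
Qed.

Lemma card_ordered_fiber_pairs_le :
  #|ordered_fiber_pairs| <= ncopies (dup_row k B) M.
Proof.
rewrite ncopiesE -(card_in_imset merge_rows_inj).
by apply/subset_leq_card/subsetP => _ /imsetP[xy /merge_rows_copy copy ->].
Qed.

Lemma ncopies_dup_row :
  ncopies B M ^ 2 <= m ^ p * n ^ q * (ncopies B M + 2 * ncopies (dup_row k B) M).
Proof.
apply: leq_trans (card_sqr_le_fiber_pairs omit_row _) _.
rewrite card_prod !card_ffun !card_ord leq_mul2l; apply/orP; right.
apply: leq_trans (card_fiber_pairs_le (key := fun fg : embedding => fg.1 k) _) _.
  by move=> x y _ _ eq_omit /val_inj; exact: omit_row_inj.
by rewrite leq_add2l leq_mul2l card_ordered_fiber_pairs_le orbT.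
Qed.

End RowDuplication.

Section Forces.
Variables (R : realType) (S : finType).
Local Open Scope ring_scope.

Lemma sqr_div_le_of_sqr_le_mulD (F : realFieldType) (N c c' e : F) :
  0 < N -> 2 * N <= e -> e <= c -> c ^+ 2 <= N * (c + 2 * c') ->
  e ^+ 2 / (4 * N) <= c'.
Proof.
move=> N_gt0 le_2N_e le_ec le_c2.
have le_c2' : c ^+ 2 <= 4 * N * c' by nra.
rewrite ler_pdivrMr ?mulr_gt0 // mulrC; nra.
Qed.

Definition forces p0 q0 (B : 'M[S]_(p0, q0)) p q (A : 'M[S]_(p, q)) : Prop :=
  exists p1 p2 : {poly R},
    (forall eps : R, 0 < eps -> 0 < p2.[eps^-1]) /\
    forall eps : R, 0 < eps ->
    forall n : nat, p1.[eps^-1] <= n%:R ->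
    forall M : 'M[S]_n,
      eps * n%:R ^+ (p0 + q0) <= (ncopies B M)%:R ->
      (p2.[eps^-1])^-1 * n%:R ^+ (p + q) <= (ncopies A M)%:R.

Lemma forces_refl p q (B : 'M[S]_(p, q)) : forces B B.
Proof.
by exists 0, 'X; split=> [eps eps_gt0|eps _ n _ M]; rewrite hornerX ?invr_gt0 ?invrK.
Qed.

Lemma forces_trans p0 q0 p1 q1 p q (B : 'M[S]_(p0, q0)) (C : 'M[S]_(p1, q1))
    (A : 'M[S]_(p, q)) :
  forces B C -> forces C A -> forces B A.
Proof.
move=> [a1 [a2 [a2_gt0 BC]]] [b1 [b2 [b2_gt0 CA]]].
(* [a1^2 + (b1 \Po a2)^2 + 1] dominates both thresholds [a1] and [b1 \Po a2]. *)
have inv_a2_gt0 eps : 0 < eps -> 0 < (a2.[eps^-1])^-1 by rewrite invr_gt0; exact: a2_gt0.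
exists (a1 ^+ 2 + (b1 \Po a2) ^+ 2 + 1), (b2 \Po a2); split.
  by move=> eps /inv_a2_gt0 /b2_gt0; rewrite invrK horner_comp.
move=> eps eps_gt0 n; rewrite !hornerE horner_comp => n_ge M copiesB.
have /CA : 0 < (a2.[eps^-1])^-1 by exact: inv_a2_gt0.
rewrite invrK horner_comp; apply; first nra.
by apply: BC copiesB => //; nra.
Qed.

Lemma forces_tr p0 q0 p q (B : 'M[S]_(p0, q0)) (A : 'M[S]_(p, q)) :
  forces B A -> forces B^T A^T.
Proof.
move=> [a1 [a2 [a2_gt0 BA]]]; exists a1, a2; split=> // eps eps_gt0 n n_ge M.
by rewrite -(trmxK M) !ncopies_tr addnC [(q + p)%N]addnC; exact: BA.
Qed.

Lemma forces_dup_row p q (k : 'I_p.+1) (B : 'M[S]_(p.+1, q)) :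
  forces B (dup_row k B).
Proof.
exists (2%:P * 'X), (4%:P * 'X ^+ 2); split.
  move=> eps eps_gt0; rewrite hornerM hornerC horner_exp hornerX.
  by rewrite mulr_gt0 ?exprn_gt0 ?invr_gt0.
move=> eps eps_gt0 n; rewrite !(hornerM, hornerC, horner_exp, hornerX) => n_ge M copiesB.
have := ncopies_dup_row k B M; rewrite -(ler_nat R) !(natrX, natrM, natrD) -exprD.
set N := n%:R ^+ (p + q) => count.
have N_gt0 : 0 < N by rewrite exprn_gt0 // (lt_le_trans _ n_ge) ?mulr_gt0 ?invr_gt0.
have eps_n_ge2 : 2 <= eps * n%:R by rewrite mulrC -ler_pdivrMr.
rewrite addSn exprS mulrA -/N in copiesB.
have e_ge : 2 * N <= eps * n%:R * N by rewrite ler_pM2r.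
apply: le_trans (sqr_div_le_of_sqr_le_mulD N_gt0 e_ge copiesB count).
rewrite !addSn !exprS -/N le_eqVlt; apply/orP; left; apply/eqP.
by field; rewrite ?gt_eqF.
Qed.

End Forces.

Section RowBlowUp.
Variables (R : realType) (S : finType).

Lemma forces_rowsub_incr m t (D : 'M[S]_(m, t)) s (sg : 'I_s -> 'I_m) :
  {homo sg : i j / i < j} -> (forall r, exists i, sg i = r) ->
  forces R D (rowsub sg D).
Proof.
move=> /incr_surj_ord_id/[apply] -[eq_sm sg_id]; subst s.
by rewrite (mxsub_eq_id (fun i => val_inj (sg_id i))) //; exact: forces_refl.
Qed.

Lemma forces_rowsub m t (D : 'M[S]_(m, t)) s (sg : 'I_s -> 'I_m) :
  {homo sg : i j / i <= j} -> (forall r, exists i, sg i = r) ->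
  forces R D (rowsub sg D).
Proof.
elim: s sg => [|s IH] sg sg_mono sg_surj; first by apply: forces_rowsub_incr => // -[].
have [/existsP[i /existsP[j /andP[lt_ij le_sg_ji]]]|] :=
  boolP [exists i : 'I_s.+1, exists j : 'I_s.+1, (i < j) && (sg j <= sg i)]; last first.
  move=> /existsPn no_inversion; apply: forces_rowsub_incr => // i j lt_ij.
  by have /existsPn/(_ j) := no_inversion i; rewrite lt_ij -ltnNge.
case: s IH sg sg_mono sg_surj i j lt_ij le_sg_ji => [|p] IH sg sg_mono sg_surj i j.
  by rewrite !ord1.
move=> lt_ij le_sg_ji; have lt_ip : i < p.+1 by have := ltn_ord j; lia.
pose k := Ordinal lt_ip.
have dup_k : sg (lift ord0 k) = sg (lift (lift ord0 k) k).
  have -> : lift (lift ord0 k) k = i by apply: val_inj; rewrite /= /bump; lia.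
  apply/val_inj/eqP; rewrite eqn_leq; apply/andP; split.
    exact: leq_trans (sg_mono (lift ord0 k) j lt_ij) le_sg_ji.
  exact: sg_mono i (lift ord0 k) (leqnSn i).
have -> : rowsub sg D = dup_row k (rowsub (sg \o lift (lift ord0 k)) D).
  rewrite /dup_row -rowsub_comp; apply: eq_rowsub => x /=; rewrite /dup_index.
  by case: (unliftP (lift ord0 k) x) => [a|] ->; rewrite ?liftK ?unlift_none ?dup_k.
apply: forces_trans (forces_dup_row R k _); apply: IH.
  by move=> a b le_ab; apply: sg_mono; rewrite /= leq_bump2.
move=> r; have [x <-] := sg_surj r.
by case: (unliftP (lift ord0 k) x) => [a|] ->; [exists a | exists k; rewrite /= dup_k].
Qed.

End RowBlowUp.

Section DeleteDuplicateRows.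
Variables (S : finType) (s t : nat) (A : 'M[S]_(s, t)).
Local Notation K := (row_keep A).

Definition first_row (i : 'I_s) : 'I_s := Ordinal (leq_ltn_trans (leq0n i) (ltn_ord i)).

Lemma first_row_kept i : first_row i \in K.
Proof. by rewrite inE eqxx. Qed.

Definition last_kept (i : 'I_s) : 'I_s :=
  [arg max_(k > first_row i | (k \in K) && (k <= i)) k].

Lemma last_keptP i : [/\ last_kept i \in K, last_kept i <= i &
  forall k, k \in K -> k <= i -> k <= last_kept i].
Proof.
rewrite /last_kept; case: arg_maxnP; first by rewrite first_row_kept.
by move=> k /andP[kK le_ki] k_max; split=> // k' k'K le_k'i; apply: k_max; rewrite k'K.
Qed.

Lemma last_kept_id i : i \in K -> last_kept i = i.
Proof.
move=> iK; have [_ le_i i_max] := last_keptP i.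
by apply/val_inj/eqP; rewrite eqn_leq le_i i_max.
Qed.

Lemma not_kept_pred i : i \notin K ->
  exists2 j : 'I_s, j.+1 = i :> nat & row j A = row i A.
Proof.
rewrite inE negb_or => /andP[i_neq0 /existsPn row_change].
have lt_is : i.-1 < s by rewrite (leq_ltn_trans (leq_pred i)).
exists (Ordinal lt_is); first by rewrite /= prednK ?lt0n.
by have := row_change (Ordinal lt_is); rewrite /= prednK ?lt0n // eqxx negbK => /eqP.
Qed.

Lemma last_kept_pred (i j : 'I_s) :
  i \notin K -> j.+1 = i :> nat -> last_kept j = last_kept i.
Proof.
move=> iNK eq_ji; have [lk_iK le_i i_max] := last_keptP i.
have [lk_jK le_j j_max] := last_keptP j.
apply/val_inj/eqP; rewrite eqn_leq i_max ?(leq_trans le_j) -?eq_ji //=.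
rewrite j_max // -ltnS eq_ji ltn_neqAle le_i andbT.
by apply: contraNneq iNK => /val_inj <-.
Qed.

Lemma row_last_kept i : row (last_kept i) A = row i A.
Proof.
have [n] := ubnP i; elim: n i => // n IH i lt_in.
have [iK|iNK] := boolP (i \in K); first by rewrite last_kept_id.
have [j eq_ji row_ji] := not_kept_pred iNK.
by rewrite -(last_kept_pred iNK eq_ji) IH // -ltnS eq_ji.
Qed.

Lemma last_kept_mono : {homo last_kept : i j / i <= j}.
Proof.
move=> i j le_ij; have [iK le_i _] := last_keptP i; have [_ _ j_max] := last_keptP j.
exact: j_max (leq_trans le_i le_ij).
Qed.

Definition kept_rank (i : 'I_s) : 'I_#|K| :=
  enum_rank_in (first_row_kept i) (last_kept i).

Lemma kept_rankK i : enum_val (kept_rank i) = last_kept i.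
Proof. by rewrite enum_rankK_in //; case: (last_keptP i). Qed.

Lemma kept_rank_mono : {homo kept_rank : i j / i <= j}.
Proof.
move=> i j le_ij; rewrite leqNgt; apply: contraTN (last_kept_mono le_ij).
by move=> /ltn_enum_val; rewrite !kept_rankK -ltnNge.
Qed.

Lemma kept_rank_surj r : exists i, kept_rank i = r.
Proof.
exists (enum_val r).
by rewrite /kept_rank last_kept_id ?enum_valK_in // enum_valP.
Qed.

Lemma rowsub_kept_rank : rowsub kept_rank (del_dup_rows A) = A.
Proof.
apply/matrixP => i j; rewrite !mxE kept_rankK.
by have /rowP/(_ j) := row_last_kept i; rewrite !mxE.
Qed.

End DeleteDuplicateRows.

Lemma forces_del_dup_rows (R : realType) (S : finType) s t (A : 'M[S]_(s, t)) :
  forces R (del_dup_rows A) A.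
Proof.
rewrite -[X in forces _ _ X]rowsub_kept_rank.
exact: forces_rowsub (@kept_rank_mono _ _ _ A) (@kept_rank_surj _ _ _ A).
Qed.

Local Open Scope ring_scope.

Theorem lemma3p1 (R : realType) (S : finType) (s t : nat) (A : 'M[S]_(s, t)) :
  exists p1 p2 : {poly R},
    (forall eps : R, 0 < eps -> 0 < p2.[eps^-1]) /\
    forall eps : R, 0 < eps ->
    forall n : nat, p1.[eps^-1] <= n%:R ->
    forall M : 'M[S]_n,
      eps * n%:R ^+ (frows A + fcols A) <= (ncopies (folding A) M)%:R ->
      (p2.[eps^-1])^-1 * n%:R ^+ (s + t) <= (ncopies A M)%:R.
Proof.
have fold_cols := forces_tr (forces_del_dup_rows R (del_dup_rows A)^T).
rewrite trmxK in fold_cols.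
exact: forces_trans fold_cols (forces_del_dup_rows R A).
Qed.
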